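(* Let $v,q\ge 2$, $m,s\ge1$ and $R\ge 0$ be integers with $ms-R\ge 2$. Then $$K_{vq}^{RT}(m,s,R)\le OCAN(ms-R,m,s,v)\, K_{q}^{RT}(m,s,R).$$
   Context: For positive integers $m,s$, the RT poset $[m\times s]$ is the set $\{1,\ldots,ms\}$ partitioned into $m$ blocks $B_i=\{is+1,\ldots,(i+1)s\}$; each block is a chain under the usual order of the integers, and elements of different blocks are incomparable. An ideal is a down-closed subset; an anti-ideal is the complement of an ideal; $\langle A\rangle$ denotes the smallest ideal containing $A$. For $x,y\in\mathbb{Z}_q^{ms}$, $d_{RT}(x,y)=|\langle\{i:x_i\neq y_i\}\rangle|$. A code $C\subseteq \mathbb{Z}_q^{ms}$ is an $R$-covering if every $x\in\mathbb{Z}_q^{ms}$ has some $c\in C$ with $d_{RT}(x,c)\le R$; $K_q^{RT}(m,s,R)$ is the smallest size of an $R$-covering. An ordered covering array $OCA(N;t,m,s,v)$ ($2\le t\le ms$) is an $N\times ms$ array over an alphabet of size $v$ with columns labeled by the elements of $[m\times s]$ such that for every anti-ideal $J$ of size $t$, every $t$-tuple over the alphabet appears as a row of the $N\times t$ subarray formed by the columns labeled by $J$; $OCAN(t,m,s,v)$ is the least such $N$. *)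

From mathcomp Require Import all_boot.
Set Implicit Arguments. Unset Strict Implicit. Unset Printing Implicit Defensive.

(* RT poset [m x s] on positions 'I_(m*s) (0-based): block of i is i %/ s;
   i <= j in the poset iff same block and i <= j as integers. *)
Definition rt_le (m s : nat) (i j : 'I_(m * s)) : bool :=
  (i %/ s == j %/ s) && (i <= j)%N.

Definition rt_ideal (m s : nat) (I : {set 'I_(m * s)}) : bool :=
  [forall i, forall j, (j \in I) ==> rt_le i j ==> (i \in I)].

Definition rt_anti_ideal (m s : nat) (J : {set 'I_(m * s)}) : bool :=
  rt_ideal (~: J).

Definition rt_gen (m s : nat) (A : {set 'I_(m * s)}) : {set 'I_(m * s)} :=
  [set j | [exists i in A, rt_le j i]].

Definition word (q m s : nat) := {ffun 'I_(m * s) -> 'I_q}.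

Definition d_RT (q m s : nat) (x y : word q m s) : nat :=
  #|rt_gen [set i | x i != y i]|.

Definition is_covering (q m s R : nat) (C : {set word q m s}) : bool :=
  [forall x : word q m s, [exists c in C, d_RT x c <= R]].

Lemma covering_exists (q m s R : nat) :
  exists n, [exists C : {set word q m s}, is_covering R C && (#|C| == n)].
Proof.
exists #|[set: word q m s]|; apply/existsP; exists [set: word q m s].
rewrite eqxx andbT; apply/forallP=> x; apply/existsP; exists x.
rewrite in_setT /= /d_RT.
have -> : [set i | x i != x i] = set0 by apply/setP=> i; rewrite !inE eqxx.
have -> : rt_gen (m:=m) (s:=s) set0 = set0.
  by apply/setP=> j; rewrite !inE; apply/existsP=> -[i]; rewrite inE.
by rewrite cards0.
Qed.

Definition K_RT (q m s R : nat) : nat := ex_minn (covering_exists q m s R).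

Definition array (N v m s : nat) := {ffun 'I_N -> {ffun 'I_(m * s) -> 'I_v}}.

Definition is_OCA (N t m s v : nat) (A : array N v m s) : bool :=
  [forall J : {set 'I_(m * s)},
     (rt_anti_ideal J && (#|J| == t)) ==>
     [forall f : {ffun 'I_(m * s) -> 'I_v},
        [exists r : 'I_N, [forall j in J, A r j == f j]]]].

Lemma OCA_exists (t m s v : nat) :
  exists N, [exists A : array N v m s, is_OCA t A].
Proof.
exists #|{ffun 'I_(m * s) -> 'I_v}|; apply/existsP.
exists [ffun r => enum_val r]; apply/forallP=> J; apply/implyP=> _.
apply/forallP=> f; apply/existsP; exists (enum_rank f).
by apply/forall_inP=> j _; rewrite ffunE enum_rankK.
Qed.

Definition OCAN (t m s v : nat) : nat := ex_minn (OCA_exists t m s v).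

From mathcomp Require Import all_boot.
From mathcomp Require Import zify.
Set Implicit Arguments. Unset Strict Implicit. Unset Printing Implicit Defensive.

(* Write each symbol of Z_(vq) as a pair of digits (a, b) in Z_v x Z_q.  Given
   an R-covering C over Z_q and an OCA with N rows and strength ms - R, the
   words whose low digits form a codeword c of C and whose high digits form a
   row of the OCA give an R-covering over Z_(vq) of size at most N |C|.  For a
   word x, pick c at RT-distance at most R from the low digits of x, enlarge
   the ideal spanned by their disagreements to an ideal I of size exactly R;
   the complement of I is an anti-ideal of size ms - R, so some row agrees
   with the high digits of x off I, and x then differs from the combined
   codeword only inside I. *)

Section RTPoset.
Variables m s : nat.
Implicit Types (i j : 'I_(m * s)) (A I : {set 'I_(m * s)}).

Lemma rt_le_refl i : rt_le i i.
Proof. by rewrite /rt_le eqxx leqnn. Qed.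

Lemma rt_le_trans j i k : rt_le i j -> rt_le j k -> rt_le i k.
Proof.
rewrite /rt_le => /andP[/eqP-> le_ij] /andP[/eqP-> le_jk].
by rewrite eqxx (leq_trans le_ij le_jk).
Qed.

Lemma rt_idealP I :
  reflect (forall i j, j \in I -> rt_le i j -> i \in I) (rt_ideal I).
Proof.
apply: (iffP forallP) => [idI i j Ij le_ij | idI i].
  by move: (forallP (idI i) j); rewrite Ij le_ij.
by apply/forallP=> j; apply/implyP=> Ij; apply/implyP; apply: idI.
Qed.

Lemma rt_gen_ideal A : rt_ideal (rt_gen A).
Proof.
apply/rt_idealP=> i j; rewrite !inE => /exists_inP[k Ak le_jk] le_ij.
by apply/exists_inP; exists k; rewrite // (rt_le_trans le_ij le_jk).
Qed.

Lemma sub_rt_gen A : A \subset rt_gen A.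
Proof. by apply/subsetP=> j Aj; rewrite inE; apply/exists_inP; exists j; rewrite ?rt_le_refl. Qed.

Lemma rt_gen_min A I : rt_ideal I -> A \subset I -> rt_gen A \subset I.
Proof.
move=> /rt_idealP idI /subsetP sAI; apply/subsetP=> j.
by rewrite inE => /exists_inP[k Ak le_jk]; apply: idI (sAI k Ak) le_jk.
Qed.

(* Add the least position outside I: all positions below it are already in I. *)
Lemma rt_ideal_grow1 I :
  rt_ideal I -> #|I| < m * s -> exists2 j, j \notin I & rt_ideal (j |: I).
Proof.
move=> /rt_idealP idI ltIms.
have : 0 < #|~: I| by have := cardsC I; rewrite card_ord; lia.
rewrite card_gt0 => /set0Pn[j0]; rewrite inE => Ij0.
case: (@arg_minnP _ j0 (fun j => j \notin I) val Ij0) => j Ij jmin.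
exists j => //; apply/rt_idealP=> i k; rewrite !inE => /predU1P[-> | Ik] le_ij.
  have [_ | Ii] := boolP (i \in I); first by rewrite orbT.
  by rewrite orbF -val_eqE eqn_leq (jmin i Ii) (andP le_ij).2.
by rewrite (idI i k Ik le_ij) orbT.
Qed.

Lemma rt_ideal_extend n I :
  rt_ideal I -> #|I| <= n <= m * s ->
  exists I', [/\ rt_ideal I', I \subset I' & #|I'| = n].
Proof.
elim: n => [|n IHn] idI /andP[leIn len].
  by exists I; rewrite subxx; move: leIn; rewrite leqn0 => /eqP.
have [eqIn | ltIn] := eqVneq #|I| n.+1; first by exists I; rewrite subxx.
have [|I' [idI' sII' cardI']] := IHn idI; first by rewrite -ltnS ltn_neqAle ltIn leIn ltnW.
have [|j I'j idjI'] := rt_ideal_grow1 idI'; first by rewrite cardI'.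
exists (j |: I'); split=> //; first by apply: subset_trans sII' (subsetUr _ _).
by rewrite cardsU1 I'j cardI'.
Qed.

End RTPoset.

Lemma d_RT_le_ideal q m s (x y : word q m s) (I : {set 'I_(m * s)}) :
  rt_ideal I -> (forall i, i \notin I -> x i = y i) -> d_RT x y <= #|I|.
Proof.
move=> idI eq_xy; apply/subset_leq_card/rt_gen_min => //.
by apply/subsetP=> i; rewrite inE; apply: contraR => /eq_xy->.
Qed.

Section Digits.
Variables v q : nat.
Hypothesis q_gt0 : 0 < q.

Lemma digit_pair_subproof (a : 'I_v) (b : 'I_q) : a * q + b < v * q.
Proof. by have := ltn_ord a; have := ltn_ord b; nia. Qed.

Definition digit_pair (a : 'I_v) (b : 'I_q) : 'I_(v * q) :=
  Ordinal (digit_pair_subproof a b).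

Lemma high_digit_subproof (x : 'I_(v * q)) : x %/ q < v.
Proof. by rewrite ltn_divLR. Qed.

Definition high_digit (x : 'I_(v * q)) : 'I_v := Ordinal (high_digit_subproof x).
Definition low_digit (x : 'I_(v * q)) : 'I_q := Ordinal (ltn_pmod x q_gt0).

Lemma digit_pairK x : digit_pair (high_digit x) (low_digit x) = x.
Proof. by apply: val_inj; rewrite /= -divn_eq. Qed.

End Digits.

Lemma K_RT_min q m s R (C : {set word q m s}) :
  is_covering R C -> K_RT q m s R <= #|C|.
Proof.
move=> covC; rewrite /K_RT; case: ex_minnP => K _; apply.
by apply/existsP; exists C; rewrite covC eqxx.
Qed.

Lemma K_RT_witness q m s R :
  exists2 C : {set word q m s}, is_covering R C & #|C| = K_RT q m s R.
Proof.
rewrite /K_RT; case: ex_minnP => K /existsP[C /andP[covC /eqP cardC]] _.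
by exists C.
Qed.

Lemma OCAN_witness t m s v :
  exists A : array (OCAN t m s v) v m s, is_OCA t A.
Proof. by rewrite /OCAN; case: ex_minnP => N /existsP[A OCA_A] _; exists A. Qed.

Section ProductCode.
Variables (v q m s R N : nat) (A : array N v m s) (C : {set word q m s}).
Hypotheses (q_gt0 : 0 < q) (R_le : R <= m * s).
Hypotheses (OCA_A : is_OCA (m * s - R) A) (covC : is_covering R C).

Definition product_word (rc : 'I_N * word q m s) : word (v * q) m s :=
  [ffun i => digit_pair q_gt0 (A rc.1 i) (rc.2 i)].

Definition product_code : {set word (v * q) m s} :=
  product_word @: setX [set: 'I_N] C.

Lemma card_product_code : #|product_code| <= N * #|C|.
Proof. by apply: leq_trans (leq_imset_card _ _) _; rewrite cardsX cardsT card_ord. Qed.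

Lemma product_code_covering : is_covering R product_code.
Proof.
apply/forallP=> x.
pose xa : {ffun 'I_(m * s) -> 'I_v} := [ffun i => high_digit q_gt0 (x i)].
pose xb : word q m s := [ffun i => low_digit q_gt0 (x i)].
have /exists_inP[c Cc dist_c] := forallP covC xb.
have [|I [idI sDI cardI]] := rt_ideal_extend (rt_gen_ideal [set i | xb i != c i]) (n := R).
  by rewrite dist_c R_le.
have antiJ : rt_anti_ideal (~: I) && (#|~: I| == m * s - R).
  rewrite /rt_anti_ideal setCK idI /=; have := cardsC I; rewrite card_ord cardI.
  by move/(congr1 (subn^~ R)); rewrite addKn => ->.
have /existsP[r row_r] := forallP (implyP (forallP OCA_A (~: I)) antiJ) xa.
apply/exists_inP; exists (product_word (r, c)); first by apply: imset_f; rewrite !inE.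
rewrite -cardI; apply: d_RT_le_ideal => // i Ii; rewrite ffunE /=.
have -> : A r i = xa i by apply/eqP/(forall_inP row_r); rewrite inE.
have -> : c i = xb i.
  apply/eqP; rewrite eq_sym; apply: contraR Ii => neq_i.
  by apply/(subsetP sDI)/(subsetP (sub_rt_gen _)); rewrite inE.
by rewrite !ffunE digit_pairK.
Qed.

End ProductCode.

Theorem theorem3 (v q m s R : nat) :
  2 <= v -> 2 <= q -> 1 <= m -> 1 <= s -> 2 <= m * s - R ->
  K_RT (v * q) m s R <= OCAN (m * s - R) m s v * K_RT q m s R.
Proof.
move=> _ q_ge2 _ _ ms_R_ge2.
have q_gt0 : 0 < q by lia.
have R_le : R <= m * s by lia.
have [A OCA_A] := OCAN_witness (m * s - R) m s v.
have [C covC <-] := K_RT_witness q m s R.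
apply: leq_trans (card_product_code A C q_gt0).
exact/K_RT_min/product_code_covering.
Qed.
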